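(* Let $A=(a_1,\dots,a_k)$ be a minimal telescopic sequence of positive integers (no $a_i$ is an $\mathbb{N}_0$-linear combination of the other terms). Then: (i) for all distinct $x,y,z\in\{1,\dots,k\}$, at least one of $\gcd(a_x,a_y)$, $\gcd(a_x,a_z)$, $\gcd(a_y,a_z)$ is greater than $1$; and (ii) for all distinct $x,y,z,w\in\{1,\dots,k\}$, either $\gcd(a_x,a_y)>1$ or $\gcd(a_z,a_w)>1$.
   Context: For a sequence $A=(a_1,\dots,a_k)$ of non-negative integers, let $d_i=\gcd(a_1,\dots,a_i)$ and $S_i=\langle a_1,\dots,a_i\rangle$ (the set of $\mathbb{N}_0$-linear combinations of $a_1,\dots,a_i$) for $i\in\{1,\dots,k\}$, and let $c_j=d_{j-1}/d_j$ for $j\in\{2,\dots,k\}$. The sequence $A$ is telescopic if $c_ja_j\in S_{j-1}$ for all $j\in\{2,\dots,k\}$. *)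

From mathcomp Require Import all_boot.
Set Implicit Arguments. Unset Strict Implicit. Unset Printing Implicit Defensive.

(* Sequences A = (a_1,...,a_k) are represented as s : seq nat, with a_i = nth 0 s (i-1). *)

Definition in_semigroup (s : seq nat) (n : nat) : Prop :=
  exists c : seq nat, size c = size s /\ n = \sum_(i < size s) nth 0 c i * nth 0 s i.

Definition dgcd (s : seq nat) (i : nat) : nat := foldr gcdn 0 (take i s).

Definition Sgen (s : seq nat) (i : nat) (n : nat) : Prop := in_semigroup (take i s) n.

Definition cfac (s : seq nat) (j : nat) : nat := dgcd s j.-1 %/ dgcd s j.

Definition telescopic (s : seq nat) : Prop :=
  forall j, 2 <= j <= size s -> Sgen s j.-1 (cfac s j * nth 0 s j.-1).

Definition drop_at (s : seq nat) (i : nat) : seq nat := take i s ++ drop i.+1 s.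

Definition minimal_seq (s : seq nat) : Prop :=
  forall i, i < size s -> ~ in_semigroup (drop_at s i) (nth 0 s i).

From mathcomp Require Import all_boot.
From mathcomp Require Import zify.

(* Write d_i = gcd(a_1,...,a_i).  If two terms a_p, a_q with
   p < q are coprime, then d_i = 1 for every i >= q.  If moreover a_q is not
   the last term, then d_q = d_{q+1} = 1, so c_{q+1} = 1 and telescopicity
   puts a_{q+1} itself into S_q = <a_1,...,a_q>, contradicting minimality.
   Hence in a minimal telescopic sequence of positive integers any two terms
   other than the last one have a common factor > 1.  Both parts of the
   theorem follow, because among three (or four) distinct indices at most one
   is the last index, so some prescribed pair avoids it. *)

Lemma foldr_gcdn_dvd (l : seq nat) (x : nat) : x \in l -> foldr gcdn 0 l %| x.
Proof.
elim: l => [//|a l IHl] /=; rewrite inE => /orP [/eqP ->|x_in_l].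
  exact: dvdn_gcdl.
exact: dvdn_trans (dvdn_gcdr _ _) (IHl x_in_l).
Qed.

Lemma dgcd_dvd (s : seq nat) (i m : nat) :
  m < i -> m < size s -> dgcd s i %| nth 0 s m.
Proof.
move=> lt_mi lt_ms; rewrite /dgcd -(nth_take 0 lt_mi); apply: foldr_gcdn_dvd.
by apply: mem_nth; rewrite size_take; case: ifP.
Qed.

Lemma dgcd_coprime (s : seq nat) (i p q : nat) :
  p < i -> q < i -> p < size s -> q < size s ->
  coprime (nth 0 s p) (nth 0 s q) -> dgcd s i = 1.
Proof.
move=> lt_pi lt_qi lt_ps lt_qs /eqP cop_pq.
by apply/eqP; rewrite -dvdn1 -cop_pq dvdn_gcd !dgcd_dvd.
Qed.

Lemma in_semigroup_catr (t u : seq nat) (n : nat) :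
  in_semigroup t n -> in_semigroup (t ++ u) n.
Proof.
move=> [c [size_c ->]]; exists (c ++ nseq (size u) 0); split.
  by rewrite !size_cat size_c size_nseq.
rewrite size_cat big_split_ord /= [X in _ + X]big1 ?addn0; last first.
  move=> i _; rewrite nth_cat -size_c ltnNge leq_addr /= addKn nth_nseq.
  by case: ifP.
by apply: eq_bigr => i _; rewrite !nth_cat size_c ltn_ord.
Qed.

(* In a telescopic sequence, if d_j = d_{j+1} = 1 then c_{j+1} = 1, so the
   term a_{j+1} (0-based index j) lies in S_j and is thus redundant. *)
Lemma telescopic_redundant (s : seq nat) (j : nat) :
  telescopic s -> 0 < j < size s -> dgcd s j = 1 -> dgcd s j.+1 = 1 ->
  in_semigroup (drop_at s j) (nth 0 s j).
Proof.
move=> tele /andP [j_gt0 lt_js] d_j d_j1.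
have range_j1 : 2 <= j.+1 <= size s by rewrite ltnS j_gt0.
have := tele _ range_j1; rewrite /cfac /= d_j d_j1 divn1 mul1n => in_S_j.
exact: in_semigroup_catr.
Qed.

Lemma minimal_telescopic_gcd_gt1 (s : seq nat) (p q : nat) :
  (forall i, i < size s -> 0 < nth 0 s i) -> telescopic s -> minimal_seq s ->
  p != q -> p.+1 < size s -> q.+1 < size s ->
  1 < gcdn (nth 0 s p) (nth 0 s q).
Proof.
move=> pos tele mini.
wlog lt_pq : p q / p < q.
  move=> IH ne_pq Hp Hq; case: (ltngtP p q) => [lt_pq|lt_qp|eq_pq].
  - exact: IH.
  - by rewrite gcdnC IH // eq_sym.
  - by rewrite eq_pq eqxx in ne_pq.
move=> _ Hp Hq.
have gcd_gt0 : 0 < gcdn (nth 0 s p) (nth 0 s q) by rewrite gcdn_gt0 pos //; lia.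
rewrite ltn_neqAle gcd_gt0 andbT eq_sym; apply/negP => cop_pq.
have d1 i : q < i -> dgcd s i = 1.
  by move=> lt_qi; apply: (@dgcd_coprime s i p q) => //; lia.
apply: (mini q.+1 Hq); apply: telescopic_redundant => //; apply: d1; lia.
Qed.

(* indices are 0-based: x < size A corresponds to x+1 in {1,...,k} *)
Theorem mainTheorem12 (A : seq nat) :
  (forall i, i < size A -> 0 < nth 0 A i) ->
  telescopic A -> minimal_seq A ->
  (forall x y z, x < size A -> y < size A -> z < size A ->
     x != y -> x != z -> y != z ->
     [\/ 1 < gcdn (nth 0 A x) (nth 0 A y),
         1 < gcdn (nth 0 A x) (nth 0 A z) |
         1 < gcdn (nth 0 A y) (nth 0 A z)]) /\
  (forall x y z w, x < size A -> y < size A -> z < size A -> w < size A ->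
     uniq [:: x; y; z; w] ->
     1 < gcdn (nth 0 A x) (nth 0 A y) \/ 1 < gcdn (nth 0 A z) (nth 0 A w)).
Proof.
move=> pos tele mini.
have pair p q := @minimal_telescopic_gcd_gt1 A p q pos tele mini.
split.
  (* at most one of x, y, z is the last index *)
  move=> x y z Hx Hy Hz ne_xy ne_xz ne_yz.
  have [x_not_last|x_last] := ltnP x.+1 (size A).
    have [y_not_last|y_last] := ltnP y.+1 (size A).
      by constructor 1; apply: pair.
    by constructor 2; apply: pair => //; lia.
  by constructor 3; apply: pair => //; lia.
(* at most one of x, y, z, w is the last index, so {x, y} or {z, w} avoids it *)
move=> x y z w Hx Hy Hz Hw /=; rewrite !inE !negb_or.
move=> /and4P [/and3P [ne_xy ne_xz ne_xw] /andP [ne_yz ne_yw] ne_zw _].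
have [x_not_last|x_last] := ltnP x.+1 (size A).
  have [y_not_last|y_last] := ltnP y.+1 (size A).
    by left; apply: pair.
  by right; apply: pair => //; lia.
by right; apply: pair => //; lia.
Qed.
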